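(* Let $B,C$ be finite subsets of $I$. The following are equivalent: (1) there is a nonempty $A\in\mathcal{P}_{\mathrm{fci}}(I)$ with $l(A)=B$ and $r(A)=C$; (2) $B\neq\emptyset$, $\min(B\cup C)\subseteq B$, and one of the following holds: (a) $\max(B\cup C)\subseteq C$ and $\mathrm{ips}(B\cup C,C\setminus B)=B\setminus C$; (b) $\max(B\cup C)\subseteq B\setminus C$ and $\mathrm{ips}(B\cup C,C\setminus B)\cup\max(B\cup C)=B\setminus C$.
   Context: Let $I$ be a dense linear order with left endpoint $0$ and no right endpoint. Let $\mathcal{P}_{\mathrm{fci}}(I)$ be the set of finite unions of closed intervals $[i,j]$, $[i,+\infty)$, $(-\infty,j]$ of $I$. For $A\in\mathcal{P}_{\mathrm{fci}}(I)$, $l(A)$ and $r(A)$ are the sets of left and right endpoints of $A$. Left endpoints are the minima of the maximal closed intervals composing $A$, and right endpoints are the maxima of the bounded ones. For a nonempty finite set $X$, $\min(X)$ and $\max(X)$ are the singletons of its least and greatest element. For finite $X,Y$, $\mathrm{ips}(X,Y)=\{i\in X: s_X(i)\in Y\}$, where $s_X$ is the successor function of $X$ with the induced order. *)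

From Stdlib Require Import List.
From HB Require Import structures.
From mathcomp Require Import all_boot all_order.
From mathcomp Require Import boolp classical_sets cardinality.
Set Implicit Arguments. Unset Strict Implicit. Unset Printing Implicit Defensive.
Import Order.TTheory.
Local Open Scope order_scope.
Local Open Scope classical_set_scope.

Inductive cinterval (T : Type) :=
  | CIcc of T & T
  | CIci of T
  | CIic of T.

Section Fci.
Context {d : Order.disp_t} {I : orderType d}.

Definition cint_set (c : cinterval I) : set I :=
  match c with
  | CIcc i j => [set x | i <= x /\ x <= j]
  | CIci i => [set x | i <= x]
  | CIic j => [set x | x <= j]
  end.

Definition is_fci (A : set I) : Prop :=
  exists s : list (cinterval I),
    A = [set x | exists c, In c s /\ cint_set c x].

Definition is_closed_interval (J : set I) : Prop :=
  J !=set0 /\ exists c : cinterval I, J = cint_set c.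

Definition maximal_ci (A J : set I) : Prop :=
  is_closed_interval J /\ J `<=` A /\
  forall K, is_closed_interval K -> J `<=` K -> K `<=` A -> K = J.

Definition is_least (X : set I) (m : I) : Prop := X m /\ forall y, X y -> m <= y.
Definition is_greatest (X : set I) (m : I) : Prop := X m /\ forall y, X y -> y <= m.

Definition lends (A : set I) : set I :=
  [set m | exists J, maximal_ci A J /\ is_least J m].
Definition rends (A : set I) : set I :=
  [set m | exists J, maximal_ci A J /\ is_greatest J m].

Definition setmin (X : set I) : set I := [set m | is_least X m].
Definition setmax (X : set I) : set I := [set m | is_greatest X m].

Definition succ_in (X : set I) (i j : I) : Prop :=
  X i /\ X j /\ i < j /\ forall k, X k -> i < k -> j <= k.

Definition ips (X Y : set I) : set I :=
  [set i | X i /\ exists j, succ_in X i j /\ Y j].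

End Fci.

(* In a dense order the maximal closed intervals of a finite union A of closed
   intervals are its connected components, so l(A) consists of the points of A
   with a gap of A just below them (or the bottom 0) and r(A) of the points of A
   with a gap just above them.  Hence every b in l(A) \ r(A) is followed, in
   l(A) u r(A), by the right end of its component, unless that component is
   unbounded, which only happens to the last point; and every c in r(A) \ l(A)
   is preceded by the left end of its component.  Conversely, finite B and C
   with this alternating pattern are realized by the union of the intervals
   [b, c] for consecutive b in B \ C and c in C \ B, the singletons of B n C,
   and [m, +oo) for a last point m in B \ C.  Condition (2) restates the
   pattern in terms of min, max and ips. *)

From Stdlib Require Import List.
From HB Require Import structures.
From mathcomp Require Import all_boot all_order.
From mathcomp Require Import boolp classical_sets cardinality.
Import Order.TTheory.
Local Open Scope order_scope.
Local Open Scope classical_set_scope.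

Lemma In_mem (T : eqType) (x : T) (s : seq T) : In x s <-> x \in s.
Proof.
elim: s => [|y s IH] /=; first by split.
rewrite inE; split=> [[->|/IH->]|/orP[/eqP->|/IH xs]]; rewrite ?eqxx ?orbT //.
- by left.
- by right.
Qed.

Section FiniteOrder.
Context {d : Order.disp_t} {I : orderType d}.
Implicit Types (S X B C : set I) (x y z : I).

Lemma finite_set_greatest {S} : finite_set S -> S !=set0 -> exists m, is_greatest S m.
Proof.
move=> /finite_seqP[s ->] [x xs]; exists (\big[Order.max/x]_(y <- s | y \in s) y).
split; first by elim/big_ind: _ => // y z ys zs; rewrite maxElt; case: ifP.
by move=> y ys; apply: le_bigmax_seq.
Qed.

Lemma finite_set_least {S} : finite_set S -> S !=set0 -> exists m, is_least S m.
Proof.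
move=> /finite_seqP[s ->] [x xs]; exists (\big[Order.min/x]_(y <- s | y \in s) y).
split; first by elim/big_ind: _ => // y z ys zs; rewrite minElt; case: ifP.
by move=> y ys; apply: ge_bigmin_seq.
Qed.

Lemma is_greatest_unique {X x y} : is_greatest X x -> is_greatest X y -> x = y.
Proof. by move=> [Xx gex] [Xy gey]; apply/le_anti; rewrite gey // gex. Qed.

Lemma succ_in_inj {X x y z} : succ_in X x z -> succ_in X y z -> x = y.
Proof.
move=> [Xx [_ [xz minx]]] [Xy [_ [yz miny]]]; apply/le_anti.
rewrite !leNgt; apply/andP; split; apply/negP => lt.
- by have := miny x Xx lt; rewrite leNgt xz.
- by have := minx y Xy lt; rewrite leNgt yz.
Qed.

Lemma succ_in_fun {X x y z} : succ_in X x y -> succ_in X x z -> y = z.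
Proof.
by move=> [_ [Xy [xy miny]]] [_ [Xz [xz minz]]]; apply/le_anti; rewrite miny // minz.
Qed.

Lemma exists_pred_in {X x z} : finite_set X -> X x -> X z -> x < z ->
  exists p, succ_in X p z.
Proof.
move=> finX Xx Xz xz.
have finS : finite_set [set y | X y /\ y < z] by apply: sub_finite_set finX => y [].
have [p [[Xp pz] maxp]] := finite_set_greatest finS (ex_intro _ x (conj Xx xz)).
exists p; split=> //; split=> //; split=> // k Xk pk.
rewrite leNgt; apply/negP => kz.
by have := maxp k (conj Xk kz); rewrite leNgt pk.
Qed.

(* The endpoint pattern of finitely many separated closed intervals, the last
   one possibly unbounded. *)
Definition alternating B C : Prop :=
  [/\ B !=set0,
      forall c, (C `\` B) c -> exists2 b, succ_in (B `|` C) b c & (B `\` C) b &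
      forall b, (B `\` C) b ->
        (exists2 c, succ_in (B `|` C) b c & (C `\` B) c) \/ is_greatest (B `|` C) b].

Definition endpoint_condition B C : Prop :=
  B !=set0 /\ setmin (B `|` C) `<=` B /\
  ((setmax (B `|` C) `<=` C /\ ips (B `|` C) (C `\` B) = B `\` C) \/
   (setmax (B `|` C) `<=` B `\` C /\
    ips (B `|` C) (C `\` B) `|` setmax (B `|` C) = B `\` C)).

Lemma alternating_endpoint_condition B C :
  alternating B C -> endpoint_condition B C.
Proof.
case=> B0 predC succB; set X := B `|` C.
have ipsX : ips X (C `\` B) `<=` B `\` C.
  move=> i [_ [j [sij CBj]]]; have [b sbj BCb] := predC j CBj.
  by rewrite (succ_in_inj sij sbj).
split=> //; split.
  move=> m [Xm minm]; apply: contrapT => nBm.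
  have Cm : C m by case: Xm.
  have [b [Xb [_ [bm _]]] _] := predC m (conj Cm nBm).
  by have := minm b Xb; rewrite leNgt bm.
have [[m [maxm nCm]]|nomax] := pselect (exists m, setmax X m /\ ~ C m).
- right; have maxBC : setmax X `<=` B `\` C.
    move=> m' maxm'; rewrite -(is_greatest_unique maxm maxm').
    by split=> //; case: maxm.1.
  split=> //; apply/seteqP; split=> [x [/ipsX|/maxBC] //|b BCb].
  case: (succB b BCb) => [[c sbc CBc]|gb]; last by right.
  by left; split; [left; case: BCb | exists c].
- left; have maxC : setmax X `<=` C.
    by move=> m maxm; apply: contrapT => nCm; apply: nomax; exists m.
  split=> //; apply/seteqP; split=> // b BCb.
  case: (succB b BCb) => [[c sbc CBc]|gb]; last by case: BCb.2; apply: maxC.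
  by split; [left; case: BCb | exists c].
Qed.

Lemma endpoint_condition_alternating B C : finite_set B -> finite_set C ->
  endpoint_condition B C -> alternating B C.
Proof.
move=> finB finC [B0 [minB cases]]; set X := B `|` C.
have ipsX : ips X (C `\` B) `<=` B `\` C.
  by case: cases => [[_ <-]|[_ <-]] // x ipsx; left.
have finX : finite_set X by rewrite finite_setU.
split=> //.
- move=> c [Cc nBc].
  have [m minm] := finite_set_least finX (ex_intro _ c (or_intror Cc)).
  have mc : m < c.
    rewrite lt_neqAle minm.2 ?andbT; last by right.
    by apply/eqP => emc; apply: nBc; rewrite -emc; apply: minB.
  have [p spc] := exists_pred_in finX minm.1 (or_intror Cc) mc.
  by exists p => //; apply: ipsX; split; [case: spc | exists c].
- move=> b; case: cases => [[_ <-]|[_ <-]].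
  + by move=> [_ [c [sbc CBc]]]; left; exists c.
  + by move=> [[_ [c [sbc CBc]]]|gb]; [left; exists c | right].
Qed.

End FiniteOrder.

Section DenseOrder.
Context {d : Order.disp_t} {I : orderType d} {o : I}
  (o_bot : forall x : I, o <= x)
  (dense : forall x y : I, x < y -> exists z, x < z /\ z < y)
  (no_top : forall x : I, exists y, x < y).
Implicit Types (A : set I) (c : cinterval I) (x y z : I).

Definition seg_in A x y := forall z, x <= z -> z <= y -> A z.
Definition ray_in A x := forall z, x <= z -> A z.
Definition left_gap A x := exists2 y, y < x & forall z, y < z -> z < x -> ~ A z.
Definition right_gap A x := exists2 y, x < y & forall z, x < z -> z < y -> ~ A z.
Definition left_edge A x := x = o \/ left_gap A x.

Lemma seg_in_refl {A x} : A x -> seg_in A x x.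
Proof. by move=> Ax z xz zx; rewrite (@le_anti _ _ z x) ?zx. Qed.

Lemma seg_in_trans {A x y z} : seg_in A x y -> seg_in A y z -> seg_in A x z.
Proof.
move=> Axy Ayz w xw wz; case: (leP w y) => [wy|yw]; first exact: Axy.
exact: Ayz (ltW yw) wz.
Qed.

Lemma seg_ray_in {A x y} : seg_in A x y -> ray_in A y -> ray_in A x.
Proof.
move=> Axy Ay w xw; case: (leP w y) => [wy|yw]; first exact: Axy.
exact: Ay (ltW yw).
Qed.

Lemma left_gap_or_meet A {x y} : y < x ->
  left_gap A x \/ exists z, [/\ y < z, z < x & A z].
Proof.
move=> yx; have [|nomeet] := pselect (exists z, [/\ y < z, z < x & A z]).
  by right.
by left; exists y => // z yz zx Az; apply: nomeet; exists z.
Qed.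

Lemma right_gap_or_meet A {x y} : x < y ->
  right_gap A x \/ exists z, [/\ x < z, z < y & A z].
Proof.
move=> xy; have [|nomeet] := pselect (exists z, [/\ x < z, z < y & A z]).
  by right.
by left; exists y => // z xz zy Az; apply: nomeet; exists z.
Qed.

Lemma seg_in_not_left_edge A x y : seg_in A x y -> x < y -> ~ left_edge A y.
Proof.
move=> Axy xy [yo|[w wy gap]]; first by move: xy; rewrite yo ltNge o_bot.
have mxy : Order.max w x < y by rewrite gt_max wy xy.
have [z [mz zy]] := dense _ _ mxy.
move: mz; rewrite gt_max => /andP[wz xz].
exact: gap z wz zy (Axy z (ltW xz) (ltW zy)).
Qed.

Lemma seg_in_not_right_gap A x y : seg_in A x y -> x < y -> ~ right_gap A x.
Proof.
move=> Axy xy [w xw gap].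
have xmy : x < Order.min w y by rewrite lt_min xw xy.
have [z [xz zm]] := dense _ _ xmy.
move: zm; rewrite lt_min => /andP[zw zy].
exact: gap z xz zw (Axy z (ltW xz) (ltW zy)).
Qed.

Lemma ray_in_not_right_gap A x : ray_in A x -> ~ right_gap A x.
Proof.
move=> Ax; have [y xy] := no_top x.
by apply: seg_in_not_right_gap xy => z xz _; apply: Ax.
Qed.

Lemma cint_seg_in c x y : cint_set c x -> cint_set c y -> seg_in (cint_set c) x y.
Proof.
case: c => [i j|i|j] /= cx cy z xz zy.
- by split; [apply: le_trans xz; case: cx | apply: le_trans zy _; case: cy].
- exact: le_trans xz.
- exact: le_trans zy _.
Qed.

Lemma cint_closed_interval {c x} : cint_set c x -> is_closed_interval (cint_set c).
Proof. by move=> cx; split; [exists x | exists c]. Qed.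

Lemma left_edge_le A c x y : cint_set c `<=` A ->
  cint_set c x -> left_edge A x -> cint_set c y -> x <= y.
Proof.
move=> cA cx lx cy; rewrite leNgt; apply/negP => yx.
apply: seg_in_not_left_edge yx lx => z yz zx.
by apply/cA; apply: cint_seg_in cy cx z yz zx.
Qed.

Lemma right_gap_ge A c x y : cint_set c `<=` A ->
  cint_set c x -> right_gap A x -> cint_set c y -> y <= x.
Proof.
move=> cA cx rx cy; rewrite leNgt; apply/negP => xy.
apply: seg_in_not_right_gap xy rx => z xz zy.
by apply/cA; apply: cint_seg_in cx cy z xz zy.
Qed.

Lemma cint_extend_left {A c m y} : cint_set c `<=` A -> is_least (cint_set c) m ->
  seg_in A y m -> y <= m ->
  exists c', [/\ cint_set c `<=` cint_set c', cint_set c' `<=` A & cint_set c' y].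
Proof.
case: c => [i j|i|j] /= cA [cm minm] Aym ym.
- exists (CIcc y j); split=> /=.
  + by move=> z cz; split; [apply: le_trans ym (minm z cz) | case: cz].
  + move=> z [yz zj]; case: (leP z m) => [zm|mz]; first exact: Aym.
    by apply: cA; split; [apply: le_trans (ltW mz); case: cm |].
  + by split; [apply: lexx | apply: le_trans ym _; case: cm].
- exists (CIci y); split=> /=.
  + by move=> z cz; apply: le_trans ym (minm z cz).
  + move=> z yz; case: (leP z m) => [zm|mz]; first exact: Aym.
    by apply: cA; apply: le_trans cm (ltW mz).
  + exact: lexx.
- by exists (CIic j); split=> //=; apply: le_trans ym cm.
Qed.

Lemma cint_extend_right {A c m y} : cint_set c `<=` A -> is_greatest (cint_set c) m ->
  seg_in A m y -> m <= y ->
  exists c', [/\ cint_set c `<=` cint_set c', cint_set c' `<=` A & cint_set c' y].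
Proof.
case: c => [i j|i|j] /= cA [cm maxm] Amy my.
- exists (CIcc i y); split=> /=.
  + by move=> z cz; split; [case: cz | apply: le_trans (maxm z cz) my].
  + move=> z [iz zy]; case: (leP z m) => [zm|mz]; last exact: Amy (ltW mz) zy.
    by apply: cA; split; [| apply: le_trans zm _; case: cm].
  + by split; [apply: le_trans _ my; case: cm | apply: lexx].
- by exists (CIci i); split=> //=; apply: le_trans cm my.
- exists (CIic y); split=> /=.
  + by move=> z cz; apply: le_trans (maxm z cz) my.
  + move=> z zy; case: (leP z m) => [zm|mz]; last exact: Amy (ltW mz) zy.
    by apply: cA; apply: le_trans zm cm.
  + exact: lexx.
Qed.

Lemma maximal_ci_cint A c x : cint_set c x -> cint_set c `<=` A ->
  (forall c', cint_set c `<=` cint_set c' -> cint_set c' `<=` A ->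
     cint_set c' `<=` cint_set c) ->
  maximal_ci A (cint_set c).
Proof.
move=> cx cA maxc; split; first exact: cint_closed_interval cx.
split=> // K [_ [c' ->]] cc' c'A.
by apply/seteqP; split; [apply: maxc | ].
Qed.

Section ClosedComponents.
Variable A : set I.
Hypothesis A_left : forall x, A x ->
  exists l, [/\ l <= x, seg_in A l x & left_edge A l].
Hypothesis A_right : forall x, A x ->
  ray_in A x \/ exists r, [/\ x <= r, seg_in A x r & right_gap A r].

Lemma not_left_edge_seg_in x : A x -> ~ left_edge A x -> exists2 y, y < x & seg_in A y x.
Proof.
move=> Ax nlx; have [l [lx Alx ll]] := A_left _ Ax.
exists l => //; rewrite lt_neqAle lx andbT; apply/eqP => elx.
by apply: nlx; rewrite -elx.
Qed.

Lemma not_right_gap_seg_in x : A x -> ~ right_gap A x -> exists2 y, x < y & seg_in A x y.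
Proof.
move=> Ax nrx; case: (A_right _ Ax) => [Arx|[r [xr Axr rr]]].
  by have [y xy] := no_top x; exists y => // z xz _; apply: Arx.
exists r => //; rewrite lt_neqAle xr andbT; apply/eqP => exr.
by apply: nrx; rewrite exr.
Qed.

Lemma lendsE : lends A = [set x | A x /\ left_edge A x].
Proof.
apply/seteqP; split=> x.
- move=> [_ [[[_ [c ->]] [cA maxc]] [cx minx]]]; split; first exact: cA.
  apply: contrapT => nlx; have [y yx Ayx] := not_left_edge_seg_in _ (cA x cx) nlx.
  have [c' [cc' c'A c'y]] := cint_extend_left cA (conj cx minx) Ayx (ltW yx).
  have cy : cint_set c y by rewrite -(maxc _ (cint_closed_interval c'y) cc' c'A).
  by have := minx y cy; rewrite leNgt yx.
- move=> [Ax lx]; case: (A_right _ Ax) => [Arx|[r [xr Axr rr]]].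
  + exists (cint_set (CIci x)); split; last by split=> /=.
    apply: (@maximal_ci_cint A (CIci x) x (lexx x) Arx) => c' xc' c'A w c'w.
    exact: left_edge_le c'A (xc' x (lexx x)) lx c'w.
  + exists (cint_set (CIcc x r)); split; last by split=> [|w []] /=.
    apply: (@maximal_ci_cint A (CIcc x r) x (conj (lexx x) xr)).
      by move=> w [xw wr]; apply: Axr.
    move=> c' xc' c'A w c'w; split.
    * exact: left_edge_le c'A (xc' x (conj (lexx x) xr)) lx c'w.
    * exact: right_gap_ge c'A (xc' r (conj xr (lexx r))) rr c'w.
Qed.

Lemma rendsE : rends A = [set x | A x /\ right_gap A x].
Proof.
apply/seteqP; split=> x.
- move=> [_ [[[_ [c ->]] [cA maxc]] [cx maxx]]]; split; first exact: cA.
  apply: contrapT => nrx; have [y xy Axy] := not_right_gap_seg_in _ (cA x cx) nrx.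
  have [c' [cc' c'A c'y]] := cint_extend_right cA (conj cx maxx) Axy (ltW xy).
  have cy : cint_set c y by rewrite -(maxc _ (cint_closed_interval c'y) cc' c'A).
  by have := maxx y cy; rewrite leNgt xy.
- move=> [Ax rx]; have [l [lx Alx ll]] := A_left _ Ax.
  exists (cint_set (CIcc l x)); split; last by split=> [|w []] /=.
  apply: (@maximal_ci_cint A (CIcc l x) x (conj lx (lexx x))).
    by move=> w [lw wx]; apply: Alx.
  move=> c' lc' c'A w c'w; split.
  + exact: left_edge_le c'A (lc' l (conj (lexx l) lx)) ll c'w.
  + exact: right_gap_ge c'A (lc' x (conj lx (lexx x))) rx c'w.
Qed.

Lemma alternating_lends_rends : A !=set0 -> alternating (lends A) (rends A).
Proof.
move=> [a Aa]; rewrite lendsE rendsE.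
set B := [set x | A x /\ left_edge A x]; set C := [set x | A x /\ right_gap A x].
have inner a' b z : seg_in A a' b -> a' < z -> z < b -> ~ (B `|` C) z.
  move=> Aab az zb [[_ lz]|[_ rz]].
  - apply: seg_in_not_left_edge az lz => w aw wz.
    exact: Aab aw (le_trans wz (ltW zb)).
  - apply: seg_in_not_right_gap zb rz => w zw wb.
    exact: Aab (le_trans (ltW az) zw) wb.
have seg_succ (b c : I) : (B `|` C) b -> (B `|` C) c -> b < c -> seg_in A b c ->
    succ_in (B `|` C) b c.
  move=> Xb Xc bc Abc; split=> //; split=> //; split=> // k Xk bk.
  by rewrite leNgt; apply/negP => kc; apply: inner Abc bk kc Xk.
split.
- have [l [lx Alx ll]] := A_left _ Aa.
  by exists l; split=> //; apply: Alx (lexx l) lx.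
- move=> c [[Ac rc] nBc].
  have [l [lc Alc ll]] := A_left _ Ac.
  have Bl : B l by split=> //; apply: Alc (lexx l) lc.
  have {}lc : l < c.
    by rewrite lt_neqAle lc andbT; apply/eqP => elc; apply: nBc; rewrite -elc.
  exists l; first by apply: seg_succ; [left | right | |].
  by split=> // [[_ rl]]; apply: seg_in_not_right_gap lc rl.
- move=> b [[Ab lb] nCb]; case: (A_right _ Ab) => [Arb|[r [br Abr rr]]].
  + right; split; first by left.
    move=> y Xy; rewrite leNgt; apply/negP => bz.
    case: Xy => [[_ ly]|[_ ry]].
    * by apply: seg_in_not_left_edge bz ly => w bw _; apply: Arb.
    * by apply: ray_in_not_right_gap ry => w yw; apply: Arb (le_trans (ltW bz) yw).
  + have Cr : C r by split=> //; apply: Abr br (lexx r).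
    have {}br : b < r.
      by rewrite lt_neqAle br andbT; apply/eqP => ebr; apply: nCb; rewrite ebr.
    left; exists r; first by apply: seg_succ; [left | right | |].
    by split=> // [[_ lr]]; apply: seg_in_not_left_edge br lr.
Qed.

End ClosedComponents.

Definition cint_ends c : seq I :=
  match c with CIcc i j => [:: i; j] | CIci i => [:: i] | CIic j => [:: j] end.

Lemma cint_seg_in_gap c x y z : cint_set c z -> x < z -> z < y ->
  (forall e, e \in cint_ends c -> (e <= x) || (y <= e)) -> seg_in (cint_set c) x y.
Proof.
move=> cz xz zy outside.
have below e : e \in cint_ends c -> e <= z -> e <= x.
  move=> /outside /orP[//|ye] ez.
  by move: zy; rewrite ltNge (le_trans ye ez).
have above e : e \in cint_ends c -> z <= e -> y <= e.
  move=> /outside /orP[ex|//] ze.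
  by move: xz; rewrite ltNge (le_trans ze ex).
case: c cz below above {outside} => [i j|i|j] /= cz below above w xw wy.
- split; first by apply: le_trans (below i (mem_head _ _) cz.1) xw.
  by apply: le_trans wy (above j _ cz.2); rewrite !inE eqxx orbT.
- exact: le_trans (below i (mem_head _ _) cz) xw.
- exact: le_trans wy (above j (mem_head _ _) cz).
Qed.

Lemma cint_ray_in_gap c x z : cint_set c z -> x < z ->
  (forall e, e \in cint_ends c -> e <= x) -> ray_in (cint_set c) x.
Proof.
case: c => [i j|i|j] /= cz xz below.
- by move: xz; rewrite ltNge (le_trans cz.2 (below j _)) // !inE eqxx orbT.
- by move=> w xw; apply: le_trans (below i (mem_head _ _)) xw.
- by move: xz; rewrite ltNge (le_trans cz (below j (mem_head _ _))).
Qed.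

Section FiniteUnion.
Variable s : list (cinterval I).

Let A := [set x | exists c, In c s /\ cint_set c x].

(* [o] is added so that every point above [o] has an endpoint below it. *)
Definition fci_ends : seq I := o :: flatten (map cint_ends s).

Lemma mem_fci_ends c e : In c s -> e \in cint_ends c -> e \in fci_ends.
Proof.
move=> cs ce; rewrite inE; apply/orP; right.
by elim: s cs => [//|c' s' IH] /= [->|/IH]; rewrite mem_cat ?ce // => ->; rewrite orbT.
Qed.

Lemma fci_left_step {x} : o < x ->
  left_gap A x \/ exists y, [/\ y \in fci_ends, y < x & seg_in A y x].
Proof.
move=> ox; pose S := [set y | y \in fci_ends /\ y < x].
have finS : finite_set S by apply: sub_finite_set (finite_seq fci_ends) => y [].
have [y [[Ey yx] maxy]] :=
  finite_set_greatest finS (ex_intro _ o (conj (mem_head _ _) ox)).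
case: (left_gap_or_meet A yx) => [|[z [yz zx [c [cs cz]]]]]; first by left.
right; exists y; split=> // w yw wx; exists c; split=> //.
apply: cint_seg_in_gap cz yz zx _ w yw wx => e ce.
case: (ltP e x) => [ex|_]; last by rewrite orbT.
by rewrite maxy //; split=> //; apply: mem_fci_ends cs ce.
Qed.

Lemma fci_right_step x : right_gap A x \/ ray_in A x \/
  exists y, [/\ y \in fci_ends, x < y & seg_in A x y].
Proof.
have [[e0 [Ee0 xe0]]|noe] := pselect (exists e, e \in fci_ends /\ x < e).
- pose S := [set y | y \in fci_ends /\ x < y].
  have finS : finite_set S by apply: sub_finite_set (finite_seq fci_ends) => y [].
  have [y [[Ey xy] miny]] := finite_set_least finS (ex_intro _ e0 (conj Ee0 xe0)).
  case: (right_gap_or_meet A xy) => [|[z [xz zy [c [cs cz]]]]]; first by left.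
  right; right; exists y; split=> // w xw wy; exists c; split=> //.
  apply: cint_seg_in_gap cz xz zy _ w xw wy => e ce.
  case: (leP e x) => [_//|xe].
  by rewrite miny ?orbT //; split=> //; apply: mem_fci_ends cs ce.
- have [y xy] := no_top x.
  case: (right_gap_or_meet A xy) => [|[z [xz _ [c [cs cz]]]]]; first by left.
  right; left => w xw; exists c; split=> //.
  apply: cint_ray_in_gap cz xz _ w xw => e ce; rewrite leNgt; apply/negP => xe.
  by apply: noe; exists e; split=> //; apply: mem_fci_ends cs ce.
Qed.

End FiniteUnion.

(* [l] is the least endpoint (or [x] itself) with [[l, x]] inside [A]; were it
   not a left edge, [fci_left_step] would give a smaller one. *)
Lemma fci_left_component {A} : is_fci A -> forall x, A x ->
  exists l, [/\ l <= x, seg_in A l x & left_edge A l].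
Proof.
move=> [s eA] x Ax.
pose S := [set l | (l = x \/ l \in fci_ends s) /\ l <= x /\ seg_in A l x].
have finS : finite_set S.
  apply: sub_finite_set (x |` [set` fci_ends s]) _ _ => [l [] //|].
  by rewrite finite_setU; split; [apply: finite_set1 | apply: finite_seq].
have [l [[_ [lx Alx]] minl]] := finite_set_least finS
  (ex_intro _ x (conj (or_introl erefl) (conj (lexx x) (seg_in_refl Ax)))).
exists l; split=> //.
have := o_bot l; rewrite le_eqVlt => /predU1P[<-|ol]; first by left.
have := fci_left_step s ol; rewrite -eA => -[|[y [Ey yl Ayl]]]; first by right.
have Sy : S y.
  by split; [right | split; [apply: le_trans (ltW yl) lx | apply: seg_in_trans Ayl Alx]].
by have := minl y Sy; rewrite leNgt yl.
Qed.

Lemma fci_right_component {A} : is_fci A -> forall x, A x ->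
  ray_in A x \/ exists r, [/\ x <= r, seg_in A x r & right_gap A r].
Proof.
move=> [s eA] x Ax.
have [|nray] := pselect (ray_in A x); [by left | right].
pose S := [set r | (r = x \/ r \in fci_ends s) /\ x <= r /\ seg_in A x r].
have finS : finite_set S.
  apply: sub_finite_set (x |` [set` fci_ends s]) _ _ => [r [] //|].
  by rewrite finite_setU; split; [apply: finite_set1 | apply: finite_seq].
have [r [[_ [xr Axr]] maxr]] := finite_set_greatest finS
  (ex_intro _ x (conj (or_introl erefl) (conj (lexx x) (seg_in_refl Ax)))).
exists r; split=> //.
have := fci_right_step s r; rewrite -eA => -[//|[Ar|[y [Ey ry Ary]]]].
  by case: nray; apply: seg_ray_in Axr Ar.
have Sy : S y.
  by split; [right | split; [apply: le_trans xr (ltW ry) | apply: seg_in_trans Axr Ary]].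
by have := maxr y Sy; rewrite leNgt ry.
Qed.

Lemma fci_alternating A : is_fci A -> A !=set0 -> alternating (lends A) (rends A).
Proof.
move=> fciA; apply: alternating_lends_rends.
- exact: fci_left_component.
- exact: fci_right_component.
Qed.

Definition segments_rays (S : set (I * I)) (M : set I) : set I :=
  [set x | (exists2 p, S p & p.1 <= x <= p.2) \/ (exists2 m, M m & m <= x)].

Lemma is_fci_segments_rays S M : finite_set S -> finite_set M ->
  is_fci (segments_rays S M).
Proof.
move=> /finite_seqP[sS ->] /finite_seqP[sM ->].
exists ([seq CIcc p.1 p.2 | p <- sS] ++ [seq CIci m | m <- sM]).
apply/seteqP; split=> x.
- move=> [[p ps /andP[px xp]]|[m ms mx]].
  + exists (CIcc p.1 p.2); split=> //; apply/in_app_iff; left.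
    by apply/in_map_iff; exists p; split=> //; apply/In_mem.
  + exists (CIci m); split=> //; apply/in_app_iff; right.
    by apply/in_map_iff; exists m; split=> //; apply/In_mem.
- move=> [c [/in_app_iff[] /in_map_iff[q [<- /In_mem qs]] cx]].
  + by left; exists q => //; apply/andP.
  + by right; exists q.
Qed.

Section Construction.
Variables B C : set I.
Hypotheses (finB : finite_set B) (finC : finite_set C) (altBC : alternating B C).
Let X := B `|` C.

Definition segment_ends : set (I * I) :=
  [set p | (B `&` C) p.1 /\ p.1 = p.2 \/ (B `\` C) p.1 /\ succ_in X p.1 p.2].
Definition ray_starts : set I := [set m | (B `\` C) m /\ is_greatest X m].
Let A := segments_rays segment_ends ray_starts.

Lemma segment_endsP (b c : I) : segment_ends (b, c) ->
  [/\ B b, C c, b <= c, (C b \/ B c -> b = c) & forall z, X z -> b < z -> c <= z].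
Proof.
case=> [[[Bb Cb] /= <-]|[[Bb nCb] /= sbc]].
  by split=> // z _ /ltW.
have [Cc nBc] : (C `\` B) c.
  case: altBC => _ _ /(_ b (conj Bb nCb)) [[c' sbc' CBc']|[_ maxb]].
    by rewrite (succ_in_fun sbc sbc').
  by case: sbc => _ [Xc [bc _]]; move: (maxb c Xc); rewrite leNgt bc.
case: sbc => _ [_ [bc minc]]; split=> //; first exact: ltW.
by move=> [/nCb|/nBc].
Qed.

Lemma segment_ends_seg_in (b c : I) : segment_ends (b, c) -> seg_in A b c.
Proof. by move=> bc z bz zc; left; exists (b, c) => //; apply/andP. Qed.

Lemma ray_starts_ray_in m : ray_starts m -> ray_in A m.
Proof. by move=> Mm z mz; right; exists m. Qed.

Lemma B_sub_A : B `<=` A.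
Proof.
move=> b Bb; have [Cb|nCb] := pselect (C b).
  by apply: (@segment_ends_seg_in b b) (lexx b) (lexx b); left.
case: altBC => _ _ /(_ b (conj Bb nCb)) [[c sbc _]|maxb].
  by apply: (@segment_ends_seg_in b c) (lexx b) (ltW sbc.2.2.1); right.
by apply: ray_starts_ray_in (lexx b).
Qed.

Lemma C_sub_A : C `<=` A.
Proof.
move=> c Cc; have [Bc|nBc] := pselect (B c).
  by apply: (@segment_ends_seg_in c c) (lexx c) (lexx c); left.
case: altBC => _ /(_ c (conj Cc nBc)) [b sbc BCb] _.
by apply: (@segment_ends_seg_in b c) (ltW sbc.2.2.1) (lexx c); right.
Qed.

Lemma A_below_B {b z} : B b -> A z -> z < b -> exists2 c, C c & z <= c < b.
Proof.
move=> Bb Az zb.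
case: Az => [[[b' c] /segment_endsP[_ Cc _ eqb'c nextc]]|[m [_ [_ maxm]] mz]].
- move=> /andP[b'z zc]; case: (ltP c b) => [cb|bc].
    by exists c => //; apply/andP.
  have b'b := le_lt_trans b'z zb.
  have ecb : c = b by apply/le_anti; rewrite bc nextc //; left.
  have eb'c : b' = c by apply: eqb'c; right; rewrite ecb.
  by move: b'b; rewrite eb'c ecb ltxx.
- by move: (maxm b (or_introl Bb)); rewrite leNgt (le_lt_trans mz zb).
Qed.

Lemma A_above_C {c z : I} : C c -> A z -> c < z -> exists2 b, B b & c < b <= z.
Proof.
move=> Cc Az cz.
case: Az => [[[b c'] /segment_endsP[Bb _ _ eqbc' nextc']]|[m [[Bm nCm] [_ maxm]] mz]].
- move=> /andP[bz zc']; case: (ltP c b) => [cb|].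
    by exists b => //; apply/andP.
  rewrite le_eqVlt => /predU1P[ebc|bc].
    have ebc' : b = c' by apply: eqbc'; left; rewrite ebc.
    by move: cz; rewrite ltNge -ebc ebc' zc'.
  by move: cz; rewrite ltNge (le_trans zc' (nextc' c (or_intror Cc) bc)).
- case: (ltP c m) => [cm|mc]; first by exists m => //; apply/andP.
  have ecm : c = m by apply/le_anti; rewrite mc maxm //; right.
  by case: nCm; rewrite -ecm.
Qed.

Lemma is_fci_A : is_fci A.
Proof.
apply: is_fci_segments_rays.
- apply: sub_finite_set (finite_setX finB finC) => -[b c] /segment_endsP[Bb Cc _ _ _].
  by split.
- by apply: sub_finite_set finB => m [[]].
Qed.

Lemma lends_A : lends A = B.
Proof.
rewrite (lendsE _ (fci_left_component is_fci_A) (fci_right_component is_fci_A)).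
apply/seteqP; split=> x.
- move=> [[[[b c] bc /andP[bx xc]]|[m Mm mx]] lx].
  + move: bx; rewrite le_eqVlt => /predU1P[<-|bx]; first by case/segment_endsP: bc.
    apply: contrapT => _; apply: seg_in_not_left_edge bx lx => z bz zx.
    exact: segment_ends_seg_in bc z bz (le_trans zx xc).
  + move: mx; rewrite le_eqVlt => /predU1P[<-|mx]; first by case: Mm => -[].
    apply: contrapT => _; apply: seg_in_not_left_edge mx lx => z mz _.
    exact: ray_starts_ray_in Mm z mz.
- move=> Bx; split; first exact: B_sub_A.
  have := o_bot x; rewrite le_eqVlt => /predU1P[<-|ox]; [by left | right].
  pose S := [set y | (y = o \/ X y) /\ y < x].
  have finS : finite_set S.
    apply: sub_finite_set (o |` X) _ _ => [y [] //|].
    by rewrite !finite_setU; do !split => //; apply: finite_set1.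
  have [y [[_ yx] maxy]] :=
    finite_set_greatest finS (ex_intro _ o (conj (or_introl erefl) ox)).
  exists y => // z yz zx Az; have [c Cc /andP[zc cx]] := A_below_B Bx Az zx.
  have := maxy c (conj (or_intror (or_intror Cc)) cx).
  by rewrite leNgt (lt_le_trans yz zc).
Qed.

Lemma rends_A : rends A = C.
Proof.
rewrite (rendsE _ (fci_left_component is_fci_A) (fci_right_component is_fci_A)).
apply/seteqP; split=> x.
- move=> [[[[b c] bc /andP[bx xc]]|[m Mm mx]] rx].
  + move: xc; rewrite le_eqVlt => /predU1P[->|xc]; first by case/segment_endsP: bc.
    apply: contrapT => _; apply: seg_in_not_right_gap xc rx => z xz zc.
    exact: segment_ends_seg_in bc z (le_trans bx xz) zc.
  + apply: contrapT => _; apply: ray_in_not_right_gap rx => z xz.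
    exact: ray_starts_ray_in Mm z (le_trans mx xz).
- move=> Cx; split; first exact: C_sub_A.
  have [y0 xy0] := no_top x.
  pose S := [set y | (y = y0 \/ X y) /\ x < y].
  have finS : finite_set S.
    apply: sub_finite_set (y0 |` X) _ _ => [y [] //|].
    by rewrite !finite_setU; do !split => //; apply: finite_set1.
  have [y [[_ xy] miny]] :=
    finite_set_least finS (ex_intro _ y0 (conj (or_introl erefl) xy0)).
  exists y => // z xz zy Az; have [b Bb /andP[xb bz]] := A_above_C Cx Az xz.
  have := miny b (conj (or_intror (or_introl Bb)) xb).
  by rewrite leNgt (le_lt_trans bz zy).
Qed.

Lemma alternating_fci : exists A, is_fci A /\ A !=set0 /\ lends A = B /\ rends A = C.
Proof.
exists A; split; first exact: is_fci_A.
split; last by split; [apply: lends_A | apply: rends_A].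
by case: altBC => -[b Bb] _ _; exists b; apply: B_sub_A.
Qed.

End Construction.

End DenseOrder.

Theorem lemma6p1 (d : Order.disp_t) (I : orderType d) (o : I)
  (o_bot : forall x : I, o <= x)
  (dense : forall x y : I, x < y -> exists z, x < z /\ z < y)
  (no_top : forall x : I, exists y, x < y)
  (B C : set I) (finB : finite_set B) (finC : finite_set C) :
  (exists A : set I, is_fci A /\ A !=set0 /\ lends A = B /\ rends A = C) <->
  (B !=set0 /\ setmin (B `|` C) `<=` B /\
   ((setmax (B `|` C) `<=` C /\ ips (B `|` C) (C `\` B) = B `\` C) \/
    (setmax (B `|` C) `<=` B `\` C /\
     ips (B `|` C) (C `\` B) `|` setmax (B `|` C) = B `\` C))).
Proof.
split=> [[A [fciA [A0 [lendsA rendsA]]]]|cond].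
- apply: alternating_endpoint_condition; rewrite -lendsA -rendsA.
  exact: fci_alternating o_bot dense no_top A fciA A0.
- apply: (alternating_fci o_bot dense no_top B C finB finC).
  exact: endpoint_condition_alternating.
Qed.
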